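(* Let $p\ge 2$ and let $\pi=\langle u,v\mid u^p=v^{p+1}\rangle$ be the group of the $(p,p+1)$ torus knot, with meridian $m=uv^{-1}$ and longitude $l=v^{p+1}m^{-p(p+1)}$. If $X,Y\in H[\pi]$ are the images of $m,l$, then $Y\in H^+[\pi][X^{\pm1}]$.
   Context: For a group $\pi$, the Brumfiel–Hilden algebra is $H[\pi]:=\mathbb{C}[\pi]/I$, where $I$ is the two-sided ideal of the group algebra generated by all elements $g(h+h^{-1})-(h+h^{-1})g$ with $g,h\in\pi$. $H^+[\pi]\subset H[\pi]$ is the subalgebra generated by the images of all $g+g^{-1}$, $g\in\pi$. For an element $X\in H[\pi]$ which is the image of a group element, $H^+[\pi][X^{\pm1}]$ denotes the subalgebra of $H[\pi]$ generated by $H^+[\pi]$, $X$ and $X^{-1}$. *)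

From HB Require Import structures.
From mathcomp Require Import all_boot all_order all_algebra.
Set Implicit Arguments. Unset Strict Implicit. Unset Printing Implicit Defensive.
Import Order.TTheory GRing.Theory Num.Theory.
Local Open Scope ring_scope.

(* Letters of words in the generators u, v of pi = < u, v | u^p = v^(p+1) >:
   u, u^-1, v, v^-1.  Every element of pi is the image of such a word. *)
Inductive gen := Gu | Gui | Gv | Gvi.

Definition gen_inv (x : gen) : gen :=
  match x with Gu => Gui | Gui => Gu | Gv => Gvi | Gvi => Gv end.

Definition word := seq gen.
Definition word_inv (w : word) : word := rev (map gen_inv w).

Section Eval.
Variables (F : fieldType) (A : algType F) (U Ui V Vi : A).

Definition gen_ev (x : gen) : A :=
  match x with Gu => U | Gui => Ui | Gv => V | Gvi => Vi end.

Definition word_ev (w : word) : A := \prod_(x <- w) gen_ev x.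

Definition sym_ev (w : word) : A := word_ev w + word_ev (word_inv w).

Definition Xev : A := U * Vi.
Definition Xiev : A := V * Ui.

Definition Yev_aux (p : nat) : A := V ^+ p.+1 * Xiev ^+ (p * p.+1).
End Eval.

(* Formal (noncommutative) algebra expressions in the generators of
   H^+[pi][X^{+-1}]: scalars, the elements g + g^-1 (g in pi, given by a word),
   X and X^-1, closed under + and *. *)
Inductive bhexpr (F : Type) :=
| BConst of F
| BSym of word
| BX
| BXi
| BAdd of bhexpr F & bhexpr F
| BMul of bhexpr F & bhexpr F.

Fixpoint bhexpr_ev (F : fieldType) (A : algType F) (U Ui V Vi : A)
    (e : bhexpr F) : A :=
  match e with
  | BConst c => c%:A
  | BSym w => sym_ev U Ui V Vi w
  | BX => Xev U Vi
  | BXi => Xiev Ui V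
  | BAdd e1 e2 => bhexpr_ev U Ui V Vi e1 + bhexpr_ev U Ui V Vi e2
  | BMul e1 e2 => bhexpr_ev U Ui V Vi e1 * bhexpr_ev U Ui V Vi e2
  end.

(* (A, U, V) is a "Brumfiel-Hilden representation" of pi: U, V invertible
   (with inverses Ui, Vi), U^p = V^(p+1), and all elements h + h^-1 are central
   in the image, i.e. g (h + h^-1) = (h + h^-1) g for all g, h in pi.
   H[pi] is the universal such algebra. *)
Definition BH_rep (F : fieldType) (A : algType F) (p : nat) (U Ui V Vi : A) :=
  U * Ui = 1 /\ Ui * U = 1 /\ V * Vi = 1 /\ Vi * V = 1 /\
  U ^+ p = V ^+ p.+1 /\
  (forall g h : word,
        word_ev U Ui V Vi g * sym_ev U Ui V Vi h
        = sym_ev U Ui V Vi h * word_ev U Ui V Vi g).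
Definition Yev (F : fieldType) (A : algType F) (p : nat) (Ui V : A) : A := Yev_aux Ui V p.

(* Write t = U + U^-1, which is central.  Since U^2 = t U - 1, every power of U
   is linear in U over the polynomials in t: U^p = a U - b with a = S_(p-1)(t)
   and b = S_(p-2)(t) (Chebyshev polynomials of the second kind).  As U^p = V^(p+1)
   commutes with V and b is central, a U commutes with V, so after multiplication
   by a the letters U and V^-1 commute:  a X^(p+1) = a U^(p+1) V^-(p+1) = a U.
   Hence  l = V^(p+1) X^-(p(p+1)) = U^p X^-(p(p+1)) = (a X^(p+1) - b) X^-(p(p+1)). *)

From HB Require Import structures.
From mathcomp Require Import all_boot all_order all_algebra.
Set Implicit Arguments. Unset Strict Implicit. Unset Printing Implicit Defensive.
Import GRing.Theory.
Local Open Scope ring_scope.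

Section LeftCommuting.
Variables (R : pzRingType) (c x y : R).
Hypotheses (cx : GRing.comm c x) (cy : GRing.comm c y).
Hypothesis cxy : c * x * y = c * y * x.

Lemma left_comm_exprX n : c * y ^+ n * x = c * x * y ^+ n.
Proof.
elim: n => [|n IHn]; first by rewrite !expr0 !mulr1.
have cyn : c * y ^+ n = y ^+ n * c := commrX n cy.
rewrite exprSr !mulrA -IHn.
by rewrite cyn -!mulrA (mulrA c) -cxy !mulrA -cyn.
Qed.

Lemma left_comm_exprMn n : c * (x * y) ^+ n = c * x ^+ n * y ^+ n.
Proof.
elim: n => [|n IHn]; first by rewrite !expr0 !mulr1.
have cxn : c * x ^+ n = x ^+ n * c := commrX n cx.
rewrite exprSr mulrA IHn !mulrA cxn -(mulrA _ c) -(mulrA _ (c * _)) left_comm_exprX.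
by rewrite !mulrA -cxn !exprSr !mulrA.
Qed.

End LeftCommuting.

(* [chebyshev2 t k] is (S_k(t), S_(k-1)(t)), where S_(-1) = 0, S_0 = 1 and
   S_(k+1) = t S_k - S_(k-1). *)
Fixpoint chebyshev2 (R : pzRingType) (t : R) (k : nat) : R * R :=
  if k is k'.+1 then (t * (chebyshev2 t k').1 - (chebyshev2 t k').2, (chebyshev2 t k').1)
  else (1, 0).

Lemma comm_chebyshev2 (R : pzRingType) (x t : R) k :
  GRing.comm x t ->
  GRing.comm x (chebyshev2 t k).1 /\ GRing.comm x (chebyshev2 t k).2.
Proof.
move=> xt; elim: k => [|k [IHa IHb]]; first exact: (conj (commr1 x) (commr0 x)).
by split=> //=; apply: commrB => //; apply: commrM.
Qed.

Lemma comm_addr_inv (R : pzRingType) (u ui : R) :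
  ui * u = 1 -> u * ui = 1 -> GRing.comm u (u + ui).
Proof. by move=> uiu uui; rewrite /GRing.comm mulrDr mulrDl uiu uui. Qed.

Lemma exprS_chebyshev2 (R : pzRingType) (u ui : R) k :
  ui * u = 1 -> u * ui = 1 ->
  u ^+ k.+1 = (chebyshev2 (u + ui) k).1 * u - (chebyshev2 (u + ui) k).2.
Proof.
move=> uiu uui; elim: k => [|k IHk]; first by rewrite mul1r subr0 expr1.
have [ua ub] := comm_chebyshev2 k (comm_addr_inv uiu uui).
have uu : u * u = (u + ui) * u - 1 by rewrite mulrDl uiu addrK.
have [ta _] := comm_chebyshev2 k (commr_refl (u + ui)).
rewrite exprS IHk mulrBr mulrA ua -mulrA uu ub /=.
by rewrite mulrBr mulr1 mulrA -ta mulrBl addrAC.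
Qed.

Section TorusKnotRelation.
Variables (R : pzRingType) (u ui v vi : R) (q : nat).
Hypotheses (uiu : ui * u = 1) (uui : u * ui = 1) (viv : vi * v = 1) (vvi : v * vi = 1).
Hypotheses (vt : GRing.comm v (u + ui)) (vit : GRing.comm vi (u + ui)).
Hypothesis torus : u ^+ q.+1 = v ^+ q.+2.

Local Notation a := (chebyshev2 (u + ui) q).1.
Local Notation b := (chebyshev2 (u + ui) q).2.

Lemma chebyshev2_mulrUV : a * u * v = a * v * u.
Proof.
have [va vb] := comm_chebyshev2 q vt.
have : (a * u - b) * v = v * (a * u - b).
  by rewrite -exprS_chebyshev2 // torus -exprSr exprS.
by rewrite mulrBl mulrBr vb mulrA -va => /addIr.
Qed.

Lemma chebyshev2_mulrUVi : a * u * vi = a * vi * u.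
Proof.
have [via _] := comm_chebyshev2 q vit.
rewrite -[RHS]mulr1 -vvi !mulrA -via.
have -> : vi * a * u * v = vi * (a * u * v) by rewrite !mulrA.
by rewrite chebyshev2_mulrUV !mulrA via -(mulrA _ vi v) viv mulr1.
Qed.

Lemma chebyshev2_mulr_meridian_exp : a * (u * vi) ^+ q.+2 = a * u.
Proof.
have [ua _] := comm_chebyshev2 q (comm_addr_inv uiu uui).
have [via _] := comm_chebyshev2 q vit.
rewrite (left_comm_exprMn (commr_sym ua) (commr_sym via) chebyshev2_mulrUVi).
rewrite exprS torus mulrA -mulrA -exprMn_comm; last by rewrite /GRing.comm vvi viv.
by rewrite vvi expr1n mulr1.
Qed.

Lemma torus_meridian_chebyshev2 : a * (u * vi) ^+ q.+2 - b = v ^+ q.+2.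
Proof. by rewrite chebyshev2_mulr_meridian_exp -exprS_chebyshev2. Qed.

End TorusKnotRelation.

Section BHExpressions.
Variable F : fieldType.

Definition bh_sub (e1 e2 : bhexpr F) : bhexpr F := BAdd e1 (BMul (BConst (-1)) e2).

Fixpoint bh_exp (e : bhexpr F) (n : nat) : bhexpr F :=
  if n is n'.+1 then BMul (bh_exp e n') e else BConst 1.

Fixpoint bh_chebyshev2 (t : bhexpr F) (k : nat) : bhexpr F * bhexpr F :=
  if k is k'.+1 then
    (bh_sub (BMul t (bh_chebyshev2 t k').1) (bh_chebyshev2 t k').2, (bh_chebyshev2 t k').1)
  else (BConst 1, BConst 0).

Variables (A : algType F) (U Ui V Vi : A).
Local Notation ev := (bhexpr_ev U Ui V Vi).

Lemma bhexpr_ev_sub e1 e2 : ev (bh_sub e1 e2) = ev e1 - ev e2.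
Proof. by rewrite /bh_sub /= mulr_algl scaleN1r. Qed.

Lemma bhexpr_ev_exp e n : ev (bh_exp e n) = ev e ^+ n.
Proof.
elim: n => [|n IHn]; rewrite /bh_exp -/bh_exp /=; first by rewrite scale1r.
by rewrite IHn exprSr.
Qed.

Lemma bhexpr_ev_chebyshev2 t k :
  (ev (bh_chebyshev2 t k).1, ev (bh_chebyshev2 t k).2) = chebyshev2 (ev t) k.
Proof.
elim: k => [|k /= <-]; first by rewrite /= scale1r scale0r.
by rewrite mulr_algl scaleN1r.
Qed.

Lemma bhexpr_ev_Gu : ev (BSym F [:: Gu]) = U + Ui.
Proof. by rewrite /= /sym_ev /word_ev /word_inv /= !big_seq1. Qed.

Lemma BH_rep_comm_sym_Gu p x :
  BH_rep p U Ui V Vi -> GRing.comm (gen_ev U Ui V Vi x) (U + Ui).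
Proof.
case=> _ [_ [_ [_ [_ central]]]].
by have := central [:: x] [:: Gu]; rewrite -bhexpr_ev_Gu /word_ev big_seq1.
Qed.

Definition longitude_bhexpr (q : nat) : bhexpr F :=
  let S := bh_chebyshev2 (BSym F [:: Gu]) q in
  BMul (bh_sub (BMul S.1 (bh_exp (BX F) q.+2)) S.2) (bh_exp (BXi F) (q.+1 * q.+2)).

Lemma bhexpr_ev_longitude q :
  ev (longitude_bhexpr q) =
  ((chebyshev2 (U + Ui) q).1 * (U * Vi) ^+ q.+2 - (chebyshev2 (U + Ui) q).2)
  * (V * Ui) ^+ (q.+1 * q.+2).
Proof.
rewrite /longitude_bhexpr -bhexpr_ev_Gu -bhexpr_ev_chebyshev2.
by cbn [bhexpr_ev]; rewrite bhexpr_ev_sub; cbn [bhexpr_ev]; rewrite !bhexpr_ev_exp.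
Qed.

End BHExpressions.

Theorem proposition5p3 (F : numClosedFieldType) (p : nat) (hp : (2 <= p)%N) :
  exists E : bhexpr F,
    forall (A : algType F) (U Ui V Vi : A),
      BH_rep p U Ui V Vi ->
      Yev p Ui V = bhexpr_ev U Ui V Vi E.
Proof.
case: p hp => [//|q] _.
exists (longitude_bhexpr F q) => A U Ui V Vi rep.
have [uui [uiu [vvi [viv [torus _]]]]] := rep.
have vt := BH_rep_comm_sym_Gu Gv rep; have vit := BH_rep_comm_sym_Gu Gvi rep.
by rewrite bhexpr_ev_longitude (torus_meridian_chebyshev2 uiu uui viv vvi vt vit torus).
Qed.
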